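(* Let $A\subseteq\mathbb{N}$ and let $f:\mathbb{N}^3\to\mathbb{N}$ be defined by $f(m,n_1,n_2)=n_1$ if $m\in A$ and $f(m,n_1,n_2)=n_2$ otherwise. Then either $f$ is not strictly definable, or $f\in\mathcal{G}$.
   Context: We work in the simply typed $\lambda$-calculus (type assignment to untyped $\lambda$-terms) with a single base type $o$, with $\beta\eta$-conversion as equality. For a type $\tau$, $\omega_\tau=(\tau\to\tau)\to\tau\to\tau$. The Church numeral of $n$ is $\rho(n)=\lambda f x.f^{n}x$. A function $f:\mathbb{N}^k\to\mathbb{N}$ is strictly definable if there exist a type $\tau$ and a term $E$ with $\vdash E:\omega_\tau\to\cdots\to\omega_\tau\to\omega_\tau$ ($k$ arguments) such that $E\,\rho(n_1)\cdots\rho(n_k)=_{\beta\eta}\rho(f(n_1,\dots,n_k))$ for all $n_1,\dots,n_k$. Extended polynomials: the smallest class of functions over $\mathbb{N}$ containing the constants $0$ and $1$, projections, addition, multiplication and $\mathrm{ifzero}(n,m,p)=(\text{if } n=0 \text{ then } m \text{ else } p)$, closed under composition. $\mathcal{G}$ is the smallest class of functions over $\mathbb{N}$ that is closed under composition and contains: all extended polynomials; for every $l\geq 2$ the function $f_1^{l}(m,n_1,\dots,n_l)=n_i$ where $i=(m\bmod l)+1$; and for every $l\geq 1$ the function $f_2^{l}(m,n_1,n_2)=(\text{if } m\leq l \text{ then } n_1 \text{ else } n_2)$. *)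

From mathcomp Require Import all_boot.
Set Implicit Arguments. Unset Strict Implicit. Unset Printing Implicit Defensive.

Inductive ty : Type := TO : ty | TArr : ty -> ty -> ty.

Inductive tm : Type :=
| Var : nat -> tm
| App : tm -> tm -> tm
| Lam : tm -> tm.

Fixpoint lift_tm (c : nat) (t : tm) : tm :=
  match t with
  | Var n => if n < c then Var n else Var n.+1
  | App t1 t2 => App (lift_tm c t1) (lift_tm c t2)
  | Lam t1 => Lam (lift_tm c.+1 t1)
  end.

Fixpoint subst_tm (j : nat) (s : tm) (t : tm) : tm :=
  match t with
  | Var n => if n == j then s else if n < j then Var n else Var n.-1
  | App t1 t2 => App (subst_tm j s t1) (subst_tm j s t2)
  | Lam t1 => Lam (subst_tm j.+1 (lift_tm 0 s) t1)
  end.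

Inductive step : tm -> tm -> Prop :=
| st_beta t u : step (App (Lam t) u) (subst_tm 0 u t)
| st_eta t : step (Lam (App (lift_tm 0 t) (Var 0))) t
| st_appl t t' u : step t t' -> step (App t u) (App t' u)
| st_appr t u u' : step u u' -> step (App t u) (App t u')
| st_lam t t' : step t t' -> step (Lam t) (Lam t').

Inductive conv : tm -> tm -> Prop :=
| conv_step t u : step t u -> conv t u
| conv_refl t : conv t t
| conv_sym t u : conv t u -> conv u t
| conv_trans t u v : conv t u -> conv u v -> conv t v.

Inductive typed : seq ty -> tm -> ty -> Prop :=
| ty_var G n : n < size G -> typed G (Var n) (nth TO G n)
| ty_app G t u s r : typed G t (TArr s r) -> typed G u s -> typed G (App t u) r
| ty_lam G t s r : typed (s :: G) t r -> typed G (Lam t) (TArr s r).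

Definition omega (t : ty) : ty := TArr (TArr t t) (TArr t t).

Definition church (n : nat) : tm := Lam (Lam (iter n (App (Var 1)) (Var 0))).

Definition arrows (k : nat) (s r : ty) : ty := iter k (TArr s) r.

Definition apps (E : tm) (args : seq tm) : tm := foldl App E args.

Definition fn (k : nat) := ('I_k -> nat) -> nat.

Definition strictly_definable (k : nat) (f : fn k) : Prop :=
  exists (t : ty) (E : tm),
    typed [::] E (arrows k (omega t) (omega t)) /\
    forall x : 'I_k -> nat,
      conv (apps E [seq church (x i) | i <- enum 'I_k]) (church (f x)).

Definition comp_fn (k m : nat) (h : fn m) (gs : 'I_m -> fn k) : fn k :=
  fun x => h (fun i => gs i x).

Definition arg3 (x : 'I_3 -> nat) (i : nat) : nat := x (inord i).

Inductive ext_poly : forall k, fn k -> Prop :=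
| ep_zero k : ext_poly (fun _ : 'I_k -> nat => 0)
| ep_one k : ext_poly (fun _ : 'I_k -> nat => 1)
| ep_proj k (i : 'I_k) : ext_poly (fun x : 'I_k -> nat => x i)
| ep_add : ext_poly (fun x : 'I_2 -> nat => x ord0 + x ord_max)
| ep_mul : ext_poly (fun x : 'I_2 -> nat => x ord0 * x ord_max)
| ep_ifzero : ext_poly (fun x : 'I_3 -> nat =>
                          if arg3 x 0 == 0 then arg3 x 1 else arg3 x 2)
| ep_comp k m (h : fn m) (gs : 'I_m -> fn k) :
    ext_poly h -> (forall i, ext_poly (gs i)) -> ext_poly (comp_fn h gs)
| ep_ext k (f g : fn k) : ext_poly f -> (forall x, f x = g x) -> ext_poly g.

Definition f1 (l : nat) : fn l.+1 :=
  fun x => x (inord ((x ord0) %% l).+1).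

Definition f2 (l : nat) : fn 3 :=
  fun x => if arg3 x 0 <= l then arg3 x 1 else arg3 x 2.

Inductive classG : forall k, fn k -> Prop :=
| G_ep k (f : fn k) : ext_poly f -> classG f
| G_f1 l : 2 <= l -> @classG l.+1 (@f1 l)
| G_f2 l : 1 <= l -> @classG 3 (f2 l)
| G_comp k m (h : fn m) (gs : 'I_m -> fn k) :
    classG h -> (forall i, classG (gs i)) -> classG (comp_fn h gs)
| G_ext k (f g : fn k) : classG f -> (forall x, f x = g x) -> classG g.

From mathcomp Require Import all_boot zify.
From Stdlib Require Import Eqdep_dec ClassicalEpsilon.
Set Implicit Arguments. Unset Strict Implicit.

(* Suppose E defines f at type τ and interpret E in the full type hierarchy over
   bool, which is finite at every type.  Denotations are preserved by
   βη-reduction and unique on β-normal terms, so by Church-Rosser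
   [[E]] [[ρ m]] [[ρ 0]] [[ρ 1]] = [[ρ (f (m, 0, 1))]]; as [[ρ 0]] <> [[ρ 1]], this
   value decides whether m ∈ A.  But [[ρ m]] is the m-th iterate of a map on a
   finite set, so it is eventually periodic in m, and hence so is A.  An
   eventually periodic selector is in G: f1^p with p a period handles all large m,
   and finitely many f2^k (ifzero for k = 0) patch the initial segment. *)

(** * Lifting and substitution *)

Ltac index_cases :=
  simpl; repeat (case: ifP => /=); intros; try done; try (f_equal; lia); try lia.

Lemma lift_lift t c d : c <= d -> lift_tm d.+1 (lift_tm c t) = lift_tm c (lift_tm d t).
Proof.
elim: t c d => [n|t1 IH1 t2 IH2|t IH] c d le_cd /=; first by index_cases.
  by rewrite IH1 // IH2.
by rewrite IH.
Qed.

Lemma subst_lift t c u : subst_tm c u (lift_tm c t) = t.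
Proof.
elim: t c u => [n|t1 IH1 t2 IH2|t IH] c u /=; first by index_cases.
  by rewrite IH1 IH2.
by rewrite IH.
Qed.

Lemma lift_inj c : injective (lift_tm c).
Proof. by move=> t t' /(congr1 (subst_tm c (Var 0))); rewrite !subst_lift. Qed.

Lemma lift_subst_le t c j u : c <= j ->
  lift_tm c (subst_tm j u t) = subst_tm j.+1 (lift_tm c u) (lift_tm c t).
Proof.
elim: t c j u => [n|t1 IH1 t2 IH2|t IH] c j u le_cj /=.
- by index_cases; case: ifP; index_cases.
- by rewrite IH1 // IH2.
- by rewrite IH // lift_lift.
Qed.

Lemma lift_subst_ge t c j u : j <= c ->
  lift_tm c (subst_tm j u t) = subst_tm j (lift_tm c u) (lift_tm c.+1 t).
Proof.
elim: t c j u => [n|t1 IH1 t2 IH2|t IH] c j u le_jc /=; first by index_cases.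
  by rewrite IH1 // IH2.
by rewrite IH // lift_lift.
Qed.

Lemma subst_subst t i j u v : j <= i ->
  subst_tm i v (subst_tm j u t) =
  subst_tm j (subst_tm i v u) (subst_tm i.+1 (lift_tm j v) t).
Proof.
elim: t i j u v => [n|t1 IH1 t2 IH2|t IH] i j u v le_ji /=.
- by index_cases; rewrite ?subst_lift; index_cases.
- by rewrite IH1 // IH2.
- by rewrite IH // lift_subst_le // lift_lift.
Qed.

Lemma subst_var_lift t j : subst_tm j (Var j) (lift_tm j.+1 t) = t.
Proof.
elim: t j => [n|t1 IH1 t2 IH2|t IH] j /=; first by index_cases.
  by rewrite IH1 IH2.
by rewrite IH.
Qed.

Lemma lift_eq_lift_inv b x c d : d <= c -> lift_tm c.+1 b = lift_tm d x ->
  exists2 y, b = lift_tm d y & x = lift_tm c y.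
Proof.
move=> le_dc Ebx; exists (subst_tm d (Var 0) b).
  by apply: (@lift_inj c.+1); rewrite lift_lift // lift_subst_ge // Ebx subst_lift.
by rewrite lift_subst_ge // Ebx subst_lift.
Qed.

(** * Abstract rewriting *)

Section Rewriting.

Variable A : Type.
Implicit Types R S P : A -> A -> Prop.

Inductive star R : A -> A -> Prop :=
| star_refl a : star R a a
| star_step a b c : R a b -> star R b c -> star R a c.

Lemma star_trans R a b c : star R a b -> star R b c -> star R a c.
Proof. by elim=> [//|x y z Rxy _ IH] /IH; apply: star_step. Qed.

Lemma star1 R a b : R a b -> star R a b.
Proof. by move=> Rab; apply: star_step Rab (star_refl _ _). Qed.

Lemma star_incl R S :
  (forall a b, R a b -> star S a b) -> forall a b, star R a b -> star S a b.
Proof.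
move=> RS a b; elim=> [x|x y z Rxy _ IH]; first exact: star_refl.
exact: star_trans (RS _ _ Rxy) IH.
Qed.

Lemma star_mono R S :
  (forall a b, R a b -> S a b) -> forall a b, star R a b -> star S a b.
Proof. by move=> RS; apply: star_incl => a b /RS /star1. Qed.

Definition diamond R := forall a b c, R a b -> R a c -> exists2 d, R b d & R c d.

Definition confluent R := diamond (star R).

Lemma diamond_confluent R : diamond R -> confluent R.
Proof.
move=> dR.
have strip a b c : R a b -> star R a c -> exists2 d, star R b d & R c d.
  move=> Rab Rac; elim: Rac b Rab => [x|x y z Rxy _ IH] b Rxb.
    by exists b => //; apply: star_refl.
  have [d Rbd Ryd] := dR _ _ _ Rxb Rxy.
  have [e Rde Rze] := IH _ Ryd.
  by exists e => //; apply: star_step Rbd Rde.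
move=> a b c Rab; elim: Rab c => [x|x y z Rxy _ IH] c Rac.
  by exists c => //; apply: star_refl.
have [d Ryd Rcd] := strip _ _ _ Rxy Rac.
have [e Rze Rde] := IH _ Ryd.
by exists e => //; apply: star_step Rcd Rde.
Qed.

Lemma confluent_between R P :
    (forall a b, R a b -> P a b) -> (forall a b, P a b -> star R a b) ->
  diamond P -> confluent R.
Proof.
move=> RP PR dP a b c Rab Rac.
have toP := star_incl (fun x y Rxy => star1 (RP x y Rxy)).
have [d Pbd Pcd] := diamond_confluent dP (toP _ _ Rab) (toP _ _ Rac).
by exists d; apply: star_incl PR _ _ _.
Qed.

Definition refl_clos R a b := a = b \/ R a b.

Lemma star_refl_clos R a b : star (refl_clos R) a b <-> star R a b.
Proof.
split; apply: star_incl => x y.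
  by case=> [->|Rxy]; [apply: star_refl|apply: star1].
by move=> Rxy; apply: star1; right.
Qed.

Lemma refl_clos_map R (f : A -> A) a b :
  (forall a b, R a b -> R (f a) (f b)) -> refl_clos R a b -> refl_clos R (f a) (f b).
Proof. by move=> Rf [->|/Rf]; [left|right]. Qed.

Lemma refl_diamond_confluent R : diamond (refl_clos R) -> confluent R.
Proof.
move=> dR; apply: (confluent_between (P := star (refl_clos R))).
- by move=> a b Rab; apply: star1; right.
- by move=> a b /star_refl_clos.
- exact: diamond_confluent.
Qed.

Definition commute R S :=
  forall a b c, R a b -> S a c -> exists2 d, S b d & R c d.

Lemma commute_star R S :
    (forall a b c, R a b -> S a c -> exists2 d, star S b d & refl_clos R c d) ->
  commute (star R) (star S).
Proof.
move=> RS.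
have strip a b c : R a b -> star S a c -> exists2 d, star S b d & refl_clos R c d.
  move=> Rab Sac; elim: Sac b Rab => [x|x y z Sxy Syz IH] b Rxb.
    by exists b; [apply: star_refl|right].
  have [d Sbd [Eyd|Ryd]] := RS _ _ _ Rxb Sxy.
    by subst d; exists z; [apply: star_trans Sbd Syz|left].
  have [e Sde Rze] := IH _ Ryd.
  by exists e => //; apply: star_trans Sbd Sde.
move=> a b c Rab; elim: Rab c => [x|x y z Rxy _ IH] c Sxc.
  by exists c => //; apply: star_refl.
have [d Syd Rcd] := strip _ _ _ Rxy Sxc.
have [e Sze Rde] := IH _ Syd.
exists e => //; case: Rcd => [->|Rcd] //; exact: star_step Rcd Rde.
Qed.

Lemma hindley_rosen R S : confluent R -> confluent S -> commute (star R) (star S) ->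
  confluent (fun a b => R a b \/ S a b).
Proof.
move=> cR cS cRS; pose U a b := star R a b \/ star S a b.
apply: (confluent_between (P := star U)).
- by move=> a b [Rab|Sab]; apply: star1; [left|right]; apply: star1.
- by apply: star_incl => a b [|]; apply: star_mono => x y; [left|right].
- apply: diamond_confluent => a b c [Rab|Sab] [Rac|Sac].
  + by have [d] := cR _ _ _ Rab Rac; exists d; left.
  + by have [d] := cRS _ _ _ Rab Sac; exists d; [right|left].
  + by have [d] := cRS _ _ _ Rac Sab; exists d; [left|right].
  + by have [d] := cS _ _ _ Sab Sac; exists d; right.
Qed.

End Rewriting.

Lemma star_map A B (R : A -> A -> Prop) (S : B -> B -> Prop) (f : A -> B) :
  (forall a b, R a b -> S (f a) (f b)) -> forall a b, star R a b -> star S (f a) (f b).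
Proof.
move=> RS a b; elim=> [x|x y z Rxy _ IH]; first exact: star_refl.
exact: star_step (RS _ _ Rxy) IH.
Qed.

(** * Confluence of βη-reduction *)

Inductive beta_step : tm -> tm -> Prop :=
| beta_redex t u : beta_step (App (Lam t) u) (subst_tm 0 u t)
| beta_appl t t' u : beta_step t t' -> beta_step (App t u) (App t' u)
| beta_appr t u u' : beta_step u u' -> beta_step (App t u) (App t u')
| beta_lam t t' : beta_step t t' -> beta_step (Lam t) (Lam t').

Inductive eta_step : tm -> tm -> Prop :=
| eta_redex t : eta_step (Lam (App (lift_tm 0 t) (Var 0))) t
| eta_appl t t' u : eta_step t t' -> eta_step (App t u) (App t' u)
| eta_appr t u u' : eta_step u u' -> eta_step (App t u) (App t u')
| eta_lam t t' : eta_step t t' -> eta_step (Lam t) (Lam t').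

Lemma step_beta_eta t u : step t u <-> beta_step t u \/ eta_step t u.
Proof.
split; last by case; elim=> *; constructor.
elim=> {t u} [t u|t|t t' u _ IH|t u u' _ IH|t t' _ IH];
  try by [left; constructor|right; constructor].
all: by case: IH => ?; [left|right]; constructor.
Qed.

Lemma star_app (R : tm -> tm -> Prop) :
    (forall t t' u, R t t' -> R (App t u) (App t' u)) ->
    (forall t u u', R u u' -> R (App t u) (App t u')) ->
  forall t t' u u', star R t t' -> star R u u' -> star R (App t u) (App t' u').
Proof.
move=> Rl Rr t t' u u' Rt Ru; apply: (@star_trans _ _ _ (App t' u)).
  by apply: (star_map (f := App^~ u)) Rt => a b /Rl.
by apply: (star_map (f := App t')) Ru => a b /Rr.
Qed.

Lemma beta_star_app t t' u u' : star beta_step t t' -> star beta_step u u' ->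
  star beta_step (App t u) (App t' u').
Proof. exact: star_app (@beta_appl) (@beta_appr) t t' u u'. Qed.

Lemma beta_star_lam t t' : star beta_step t t' -> star beta_step (Lam t) (Lam t').
Proof. exact: star_map (@beta_lam) t t'. Qed.

Lemma eta_star_app t t' u u' : star eta_step t t' -> star eta_step u u' ->
  star eta_step (App t u) (App t' u').
Proof. exact: star_app (@eta_appl) (@eta_appr) t t' u u'. Qed.

Lemma eta_star_lam t t' : star eta_step t t' -> star eta_step (Lam t) (Lam t').
Proof. exact: star_map (@eta_lam) t t'. Qed.

Inductive pbeta : tm -> tm -> Prop :=
| pbeta_var n : pbeta (Var n) (Var n)
| pbeta_app t t' u u' : pbeta t t' -> pbeta u u' -> pbeta (App t u) (App t' u')
| pbeta_lam t t' : pbeta t t' -> pbeta (Lam t) (Lam t')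
| pbeta_redex t t' u u' :
    pbeta t t' -> pbeta u u' -> pbeta (App (Lam t) u) (subst_tm 0 u' t').

Lemma pbeta_refl t : pbeta t t.
Proof. by elim: t => *; constructor. Qed.

Lemma pbeta_lift t t' c : pbeta t t' -> pbeta (lift_tm c t) (lift_tm c t').
Proof.
move=> tt'; elim: tt' c => {t t'} /=; try by move=> *; constructor.
  by move=> n c; case: ifP => _; constructor.
by move=> t t' u u' _ IHt _ IHu c; rewrite lift_subst_ge //; apply: pbeta_redex.
Qed.

Lemma pbeta_subst t t' j u u' :
  pbeta t t' -> pbeta u u' -> pbeta (subst_tm j u t) (subst_tm j u' t').
Proof.
move=> tt'; elim: tt' j u u' => {t t'} /=.
- by move=> n j u u' uu'; do 2 case: ifP => // _; constructor.
- by move=> *; constructor; auto.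
- by move=> t t' _ IH j u u' uu'; constructor; apply/IH/pbeta_lift.
- move=> t t' s s' _ IHt _ IHs j u u' uu'.
  rewrite (subst_subst _ _ _ (leq0n j)).
  by apply: pbeta_redex; [apply/IHt/pbeta_lift|apply: IHs].
Qed.

(* Takahashi's complete development. *)
Fixpoint develop (t : tm) : tm :=
  match t with
  | Var n => Var n
  | App (Lam b) u => subst_tm 0 (develop u) (develop b)
  | App t u => App (develop t) (develop u)
  | Lam b => Lam (develop b)
  end.

Lemma pbeta_develop t t' : pbeta t t' -> pbeta t' (develop t).
Proof.
elim=> {t t'} /=; try by move=> *; constructor.
- move=> t t' u u' tt' IHt _ IHu.
  case: t tt' IHt => [n|t1 t2|b] tt' IHt; try by constructor.
  by inversion tt'; subst; inversion IHt; subst; apply: pbeta_redex.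
- by move=> t t' u u' _ IHt _ IHu; apply: pbeta_subst.
Qed.

Lemma pbeta_beta_star t t' : pbeta t t' -> star beta_step t t'.
Proof.
elim=> {t t'} [n|t t' u u' _ IHt _ IHu|t t' _ IHt|t t' u u' _ IHt _ IHu].
- exact: star_refl.
- exact: beta_star_app.
- exact: beta_star_lam.
- apply: star_trans (beta_star_app (beta_star_lam IHt) IHu) _.
  by apply: star1; constructor.
Qed.

Lemma beta_confluent : confluent beta_step.
Proof.
apply: (confluent_between (P := pbeta)).
- move=> a b; elim=> {a b} [t u|t t' u _ IH|t u u' _ IH|t t' _ IH].
  + by apply: pbeta_redex; apply: pbeta_refl.
  + by apply: pbeta_app => //; apply: pbeta_refl.
  + by apply: pbeta_app => //; apply: pbeta_refl.
  + exact: pbeta_lam.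
- exact: pbeta_beta_star.
- by move=> a b c ab ac; exists (develop a); apply: pbeta_develop.
Qed.

Lemma lift_eq_var0 b c : lift_tm c.+1 b = Var 0 -> b = Var 0.
Proof. by case: b => //= n; case: ifP => // _ [->]. Qed.

Lemma eta_step_lift t t' c : eta_step t t' -> eta_step (lift_tm c t) (lift_tm c t').
Proof.
move=> tt'; elim: tt' c => {t t'} /=; try by move=> *; constructor.
by move=> t c; rewrite lift_lift //; apply: eta_redex.
Qed.

Lemma eta_step_lift_inv t c u : eta_step (lift_tm c t) u ->
  exists2 t', u = lift_tm c t' & eta_step t t'.
Proof.
elim: t c u => [n|a IHa b IHb|b IH] c u /=.
- by case: ifP => _ H; inversion H.
- move=> H; inversion H as [|? a' ? Ha|? ? b' Hb|]; subst.
  + by have [x -> ?] := IHa _ _ Ha; exists (App x b) => //; apply: eta_appl.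
  + by have [x -> ?] := IHb _ _ Hb; exists (App a x) => //; apply: eta_appr.
- move=> H; inversion H as [t' E| | |? b' Hb]; subst.
  + case: b E {IH H} => [n|b1 b2|b] //=; first by case: ifP.
    case=> /esym E1 /esym/lift_eq_var0 ->.
    have [y -> ->] := lift_eq_lift_inv (leq0n c) E1.
    by exists y => //; apply: eta_redex.
  + by have [x -> ?] := IH _ _ Hb; exists (Lam x) => //; apply: eta_lam.
Qed.

Lemma beta_step_lift_inv t c u : beta_step (lift_tm c t) u ->
  exists2 t', u = lift_tm c t' & beta_step t t'.
Proof.
elim: t c u => [n|a IHa b IHb|b IH] c u /=.
- by case: ifP => _ H; inversion H.
- move=> H; inversion H as [a0 ? E|? a' ? Ha|? ? b' Hb|]; subst.
  + case: a E {IHa H} => [n|a1 a2|a] //=; first by case: ifP.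
    case=> ->; exists (subst_tm 0 b a); last exact: beta_redex.
    by rewrite lift_subst_ge.
  + by have [x -> ?] := IHa _ _ Ha; exists (App x b) => //; apply: beta_appl.
  + by have [x -> ?] := IHb _ _ Hb; exists (App a x) => //; apply: beta_appr.
- move=> H; inversion H as [| | |? b' Hb]; subst.
  by have [x -> ?] := IH _ _ Hb; exists (Lam x) => //; apply: beta_lam.
Qed.

Lemma eta_step_eta_redex t u : eta_step (Lam (App (lift_tm 0 t) (Var 0))) u ->
  u = t \/ exists2 t', u = Lam (App (lift_tm 0 t') (Var 0)) & eta_step t t'.
Proof.
move=> H; inversion H as [t0 E| | |b b' H1]; subst; first by left; apply: lift_inj E.
right; inversion H1 as [|a a' v Ha|a v v' Hv|]; subst; last by inversion Hv.
by have [t' -> ?] := eta_step_lift_inv Ha; exists t'.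
Qed.

Lemma eta_diamond : diamond (refl_clos eta_step).
Proof.
have redex t u : eta_step (Lam (App (lift_tm 0 t) (Var 0))) u ->
    exists2 w, refl_clos eta_step t w & refl_clos eta_step u w.
  case/eta_step_eta_redex => [->|[t' -> tt']]; first by exists t; left.
  by exists t'; right => //; apply: eta_redex.
have key s t u : eta_step s t -> eta_step s u ->
    exists2 w, refl_clos eta_step t w & refl_clos eta_step u w.
  move=> st; elim: st u => {s t} [t|t t' v tt' IH|t v v' vv' IH|t t' tt' IH] u su.
  - by have [w] := redex _ _ su; exists w.
  - inversion su as [|? t'' ? tt''|? ? v'' vv''|]; subst.
      have [w t'w uw] := IH _ tt''.
      by exists (App w v); apply: (refl_clos_map (f := App^~ v)) => // *; apply: eta_appl.
    by exists (App t' v''); right; constructor.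
  - inversion su as [|? t' ? tt'|? ? v'' vv''|]; subst.
      by exists (App t' v'); right; constructor.
    have [w v'w uw] := IH _ vv''.
    by exists (App t w); apply: (refl_clos_map (f := App t)) => // *; apply: eta_appr.
  - inversion su as [t'' E| | |? t'' tt'']; subst.
      by have [w] := redex _ _ (eta_lam tt'); exists w.
    have [w t'w uw] := IH _ tt''.
    by exists (Lam w); apply: (refl_clos_map (f := Lam)) => // *; apply: eta_lam.
move=> a b c [<-|ab] [<-|ac].
- by exists a; left.
- by exists c; [right|left].
- by exists b; [left|right].
- exact: key ab ac.
Qed.

Lemma eta_step_subst_l b b' j a :
  eta_step b b' -> eta_step (subst_tm j a b) (subst_tm j a b').
Proof.
move=> bb'; elim: bb' j a => {b b'} /=; try by move=> *; constructor.
by move=> t j a; rewrite -lift_subst_le //; apply: eta_redex.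
Qed.

Lemma eta_step_subst_r a a' b j :
  eta_step a a' -> star eta_step (subst_tm j a b) (subst_tm j a' b).
Proof.
elim: b a a' j => [n|b1 IH1 b2 IH2|b IH] a a' j aa' /=.
- by case: ifP => _; [apply: star1|apply: star_refl].
- by apply: eta_star_app; auto.
- by apply/eta_star_lam/IH/eta_step_lift.
Qed.

Lemma beta_redex_eta_step t v u : eta_step (App (Lam t) v) u ->
  exists2 w, star eta_step (subst_tm 0 v t) w & refl_clos beta_step u w.
Proof.
move=> H; inversion H as [|b b' v' Hb|b v0 v' Hv|]; subst.
- inversion Hb as [d| | |t0 t' Ht]; subst.
    by rewrite /= subst_lift; exists (App b' v); [apply: star_refl|left].
  by exists (subst_tm 0 v t'); [apply/star1/eta_step_subst_l|right; apply: beta_redex].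
- by exists (subst_tm 0 v' t); [apply: eta_step_subst_r|right; apply: beta_redex].
Qed.

Lemma eta_redex_beta_step d t' : beta_step (App (lift_tm 0 d) (Var 0)) t' ->
  exists2 w, star eta_step (Lam t') w & refl_clos beta_step d w.
Proof.
move=> H; inversion H as [b v E|a a' v Ha|a v v' Hv|]; subst; last by inversion Hv.
- case: d E {H} => [n|d1 d2|d0] //=.
  case=> ->; rewrite subst_var_lift.
  by exists (Lam d0); [apply: star_refl|left].
- have [y -> dy] := beta_step_lift_inv Ha.
  by exists y; [apply/star1/eta_redex|right].
Qed.

Lemma beta_eta_commute1 s t u : beta_step s t -> eta_step s u ->
  exists2 w, star eta_step t w & refl_clos beta_step u w.
Proof.
move=> st; elim: st u => {s t} [t v|t t' v tt' IH|t v v' vv' IH|t t' tt' IH] u su.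
- exact: beta_redex_eta_step.
- inversion su as [|? t'' ? tt''|? ? v' vv'|]; subst.
    have [w tw uw] := IH _ tt''; exists (App w v).
      exact: eta_star_app tw (star_refl _ _).
    by apply: (refl_clos_map (f := App^~ v) _ uw) => *; apply: beta_appl.
  by exists (App t' v'); [apply/star1/eta_appr|right; apply: beta_appl].
- inversion su as [|? t' ? tt'|? ? v'' vv''|]; subst.
    by exists (App t' v'); [apply/star1/eta_appl|right; apply: beta_appr].
  have [w vw uw] := IH _ vv''; exists (App t w).
    exact: eta_star_app (star_refl _ _) vw.
  by apply: (refl_clos_map (f := App t) _ uw) => *; apply: beta_appr.
- inversion su as [t'' E| | |? t'' tt'']; subst; first exact: eta_redex_beta_step.
  have [w tw uw] := IH _ tt''; exists (Lam w); first exact: eta_star_lam tw.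
  by apply: (refl_clos_map (f := Lam) _ uw) => *; apply: beta_lam.
Qed.

Lemma step_confluent : confluent step.
Proof.
have cBE := hindley_rosen beta_confluent (refl_diamond_confluent eta_diamond)
  (commute_star beta_eta_commute1).
apply: (confluent_between (P := star (fun a b => beta_step a b \/ eta_step a b))) => //.
- by move=> a b ab; apply/star1/step_beta_eta.
- by apply: star_incl => a b ab; apply/star1/step_beta_eta.
Qed.

Lemma conv_join t u : conv t u -> exists2 w, star step t w & star step u w.
Proof.
elim=> {t u} [t u tu|t|t u _ [w ? ?]|t u v _ [w1 tw1 uw1] _ [w2 uw2 vw2]].
- by exists u; [apply: star1|apply: star_refl].
- by exists t; apply: star_refl.
- by exists w.
- have [d w1d w2d] := step_confluent uw1 uw2.
  by exists d; [apply: star_trans tw1 w1d|apply: star_trans vw2 w2d].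
Qed.

(** * Denotations in the full type hierarchy over bool *)

Fixpoint sem (T : ty) : finType :=
  match T with TO => bool | TArr a b => {ffun sem a -> sem b} end.

Definition ty_eq_dec (a b : ty) : {a = b} + {a <> b}.
Proof. decide equality. Defined.

Lemma existT_sem_inj T (v v' : sem T) : existT sem T v = existT sem T v' -> v = v'.
Proof. exact: (@inj_pair2_eq_dec _ ty_eq_dec sem). Qed.

Lemma existT_sem_ty T T' (v : sem T) (v' : sem T') :
  existT sem T v = existT sem T' v' -> T = T'.
Proof. exact: (congr1 (@projT1 _ _)). Qed.

Fixpoint sem_const (c : bool) (T : ty) : sem T :=
  match T return sem T with TO => c | TArr a b => [ffun _ => sem_const c b] end.

Lemma sem_const_neq T : sem_const false T <> sem_const true T.
Proof.
elim: T => [//|a _ b IH] /= /ffunP /(_ (sem_const false a)).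
by rewrite !ffunE.
Qed.

Fixpoint sem_args (T : ty) : Type :=
  match T with TO => unit | TArr a b => (sem a * sem_args b)%type end.

Fixpoint apply_args (T : ty) : sem T -> sem_args T -> bool :=
  match T return sem T -> sem_args T -> bool with
  | TO => fun v _ => v
  | TArr a b => fun f p => apply_args (f p.1) p.2
  end.

Fixpoint args0 (T : ty) : sem_args T :=
  match T return sem_args T with TO => tt | TArr a b => (sem_const false a, args0 b) end.

Lemma apply_args_inj T (v v' : sem T) :
  (forall a, apply_args v a = apply_args v' a) -> v = v'.
Proof.
elim: T v v' => [|a IHa b IHb] v v' vv'; first exact: (vv' tt).
by apply/ffunP => x; apply: IHb => p; apply: (vv' (x, p)).
Qed.

Definition env := nat -> {T : ty & sem T}.

Definition insert (rho : env) c (x : {T : ty & sem T}) : env :=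
  fun n => if n < c then rho n else if n == c then x else rho n.-1.

Notation scons x rho := (insert rho 0 x).

(* [den rho t v]: the untyped term [t] denotes [v]; a relation, since [t] may
   denote at several types.  [den_glue] closes it under agreement on every
   argument list; this is what makes denotations survive η-reduction, where for
   each [x] all we know is some denotation [g] of [t] with [g x = F x]. *)
Inductive den : env -> tm -> forall T, sem T -> Prop :=
| den_var rho n T v : rho n = existT _ T v -> den rho (Var n) v
| den_app rho t u s r (f : sem (TArr s r)) x :
    den rho t f -> den rho u x -> den rho (App t u) (f x)
| den_lam rho t s r (F : sem s -> sem r) :
    (forall x, den (scons (existT _ s x) rho) t (F x)) ->
    den rho (Lam t) ([ffun x => F x] : sem (TArr s r))
| den_glue rho t T (v : sem T) (V : sem_args T -> sem T) :
    (forall a, den rho t (V a)) -> (forall a, apply_args (V a) a = apply_args v a) ->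
    den rho t v.

Lemma den_ext rho rho' t T (v : sem T) :
  den rho t v -> rho =1 rho' -> den rho' t v.
Proof.
move=> tv; elim: tv rho' => {rho t T v}.
- by move=> rho n T v E rho' rr'; apply: den_var; rewrite -rr'.
- by move=> *; apply: den_app; auto.
- move=> rho t s r F _ IH rho' rr'; apply: den_lam => x.
  by apply: IH => -[|n] //=; rewrite /insert /= rr'.
- by move=> rho t T v V _ IH HV rho' rr'; apply: (den_glue (V := V)) => // a; auto.
Qed.

Lemma insert_scons rho c x y : insert (scons y rho) c.+1 x =1 scons y (insert rho c x).
Proof. by case=> [|[|n]] //; rewrite /insert /=; do ! case: ifP => //; lia. Qed.

Lemma den_lift rho t T (v : sem T) c x :
  den rho t v -> den (insert rho c x) (lift_tm c t) v.
Proof.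
move=> tv; elim: tv c x => {rho t T v}.
- move=> rho n T v E c x /=; case: ifP => lt_nc; apply: den_var; rewrite /insert.
    by rewrite lt_nc.
  by rewrite ifF ?ifF //; lia.
- by move=> *; apply: den_app; auto.
- move=> rho t s r F _ IH c y /=; apply: den_lam => x.
  exact: den_ext (IH x c.+1 y) (insert_scons _ _ _ _).
- by move=> rho t T v V _ IH HV c y; apply: (den_glue (V := V)) => // a; auto.
Qed.

Lemma den_unlift rho' t' T (v : sem T) rho c x t :
  den rho' t' v -> rho' =1 insert rho c x -> t' = lift_tm c t -> den rho t v.
Proof.
move=> tv; elim: tv rho c x t => {rho' t' T v}.
- move=> rho' n T v E rho c x [m|//|//] rr' /=.
  case: ifP => lt_mc [En]; subst n; apply: den_var; rewrite -E rr' /insert.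
    by rewrite lt_mc.
  by rewrite ifF ?ifF //; lia.
- move=> rho' t u s r f y _ IH1 _ IH2 rho c x [m|a b|b] rr' //=.
    by case: ifP.
  by case=> ta ub; apply: den_app; [apply: IH1 ta|apply: IH2 ub].
- move=> rho' t s r F _ IH rho c x [m|a b|b] rr' //=; first by case: ifP.
  case=> tb; apply: den_lam => y; apply: (IH y _ c.+1 x) => // n.
  by rewrite insert_scons /insert; case: ifP => // _; case: ifP.
- move=> rho' t T v V _ IH HV rho c x t0 rr' E.
  by apply: (den_glue (V := V)) => // a; apply: IH rr' E.
Qed.

Lemma den_subst rho' t T (v : sem T) rho j u s (x : sem s) :
  den rho' t v -> rho' =1 insert rho j (existT _ s x) -> den rho u x ->
  den rho (subst_tm j u t) v.
Proof.
move=> tv; elim: tv rho j u s x => {rho' t T v}.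
- move=> rho' n T v E rho j u s x rr' ux /=.
  move: E; rewrite rr' /insert; case: (ltngtP n j) => _ E; try exact: den_var.
  by have ET := existT_sem_ty E; subst T; rewrite -(existT_sem_inj E).
- move=> rho' t u0 s r f y _ IH1 _ IH2 rho j u s0 x rr' ux /=.
  by apply: den_app; [apply: IH1 rr' ux|apply: IH2 rr' ux].
- move=> rho' t s r F _ IH rho j u s0 x rr' ux /=.
  apply: den_lam => y; apply: (IH y _ j.+1 _ s0 x); last exact: den_lift.
  by move=> [|n]; rewrite insert_scons //; apply: rr'.
- move=> rho' t T v V _ IH HV rho j u s x rr' ux.
  by apply: (den_glue (V := V)) => // a; apply: IH rr' ux.
Qed.

Lemma den_lam_inv rho t T (v : sem T) b s r (f : sem (TArr s r)) y :
  den rho t v -> t = Lam b -> existT sem T v = existT sem (TArr s r) f ->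
  den (scons (existT _ s y) rho) b (f y).
Proof.
move=> tv; elim: tv b s r f y => {rho t T v} //.
- move=> rho t s r F tF _ b s0 r0 f y [<-] E.
  case: (existT_sem_ty E) => ? ?; subst s0 r0.
  by rewrite -(existT_sem_inj E) ffunE.
- move=> rho t T v V _ IH VV b s r f y Et E.
  have ET := existT_sem_ty E; subst T; have Ev := existT_sem_inj E; subst v.
  apply: (den_glue (V := fun a => V (y, a) y)) => a.
    exact: (IH (y, a) b s r (V (y, a)) y Et erefl).
  exact: (VV (y, a)).
Qed.

Lemma den_lam_arrow rho t T (v : sem T) b :
  den rho t v -> t = Lam b -> exists s r, T = TArr s r.
Proof.
move=> tv; elim: tv b => {rho t T v} //; first by move=> rho t s r *; exists s, r.
by move=> rho t T v V _ IH _ b E; apply: (IH (args0 T) b E).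
Qed.

Lemma den_var_inv rho t T (v : sem T) n :
  den rho t v -> t = Var n -> rho n = existT _ T v.
Proof.
move=> tv; elim: tv n => {rho t T v} //; first by move=> rho n T v E m [<-].
move=> rho t T v V _ IH VV n Et; have E0 := IH (args0 T) n Et.
suff -> : v = V (args0 T) by [].
apply: apply_args_inj => a; rewrite -VV.
by have := IH a n Et; rewrite E0 => /existT_sem_inj ->.
Qed.

Lemma den_app_inv rho t T (v : sem T) t1 u (a : sem_args T) :
  den rho t v -> t = App t1 u ->
  exists s (f : sem (TArr s T)) x,
    [/\ den rho t1 f, den rho u x & apply_args (f x) a = apply_args v a].
Proof.
move=> tv; elim: tv t1 u a => {rho t T v} //.
  by move=> rho t u s r f x tf _ ux _ t1 u1 a [<- <-]; exists s, f, x.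
move=> rho t T v V _ IH VV t1 u a Et.
have [s [f [x [t1f ux fxa]]]] := IH a t1 u a Et.
by exists s, f, x; split => //; rewrite fxa VV.
Qed.

Lemma den_beta_step rho t t' T (v : sem T) :
  den rho t v -> beta_step t t' -> den rho t' v.
Proof.
move=> tv; elim: tv t' => {rho t T v}.
- by move=> rho n T v _ t' H; inversion H.
- move=> rho t u s r f x tf IHt ux IHu t' H; inversion H; subst.
  + apply: (den_subst (den_lam_inv x tf erefl erefl)) ux.
    by case=> [|[|n]] //=.
  + by apply: den_app => //; apply: IHt.
  + by apply: den_app => //; apply: IHu.
- move=> rho t s r F _ IH t' H; inversion H; subst.
  by apply: den_lam => x; apply: IH.
- by move=> rho t T v V _ IH VV t' tt'; apply: (den_glue (V := V)) => // a; apply: IH.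
Qed.

Lemma den_eta_body rho' t T (w : sem T) t0 rho s (y : sem s) (a : sem_args T) :
  den rho' t w -> t = App (lift_tm 0 t0) (Var 0) -> rho' =1 scons (existT _ s y) rho ->
  exists2 g : sem (TArr s T), den rho t0 g & apply_args g (y, a) = apply_args w a.
Proof.
move=> tw; elim: tw t0 rho s y a => {rho' t T w} //.
- move=> rho' t u s' r f x tf _ ux _ t0 rho s y a [E1 E2] rr'; subst.
  have := den_var_inv ux erefl; rewrite rr' => Ex.
  have ET := existT_sem_ty Ex; subst s'; have Exy := existT_sem_inj Ex; subst x.
  by exists f => //; apply: den_unlift tf rr' erefl.
- move=> rho' t T w V _ IH VV t0 rho s y a Et rr'.
  by have [g t0g ga] := IH a t0 rho s y a Et rr'; exists g; rewrite // ga VV.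
Qed.

Lemma den_eta_step rho t t' T (v : sem T) :
  den rho t v -> eta_step t t' -> den rho t' v.
Proof.
move=> tv; elim: tv t' => {rho t T v}.
- by move=> rho n T v _ t' H; inversion H.
- move=> rho t u s r f x tf IHt ux IHu t' H; inversion H; subst.
  + by apply: den_app => //; apply: IHt.
  + by apply: den_app => //; apply: IHu.
- move=> rho t s r F tF IH t' H; inversion H; subst; last first.
    by apply: den_lam => x; apply: IH.
  have agree (p : sem_args (TArr s r)) : exists g : sem (TArr s r),
      den rho t' g /\ apply_args g p = apply_args ([ffun x => F x] : sem (TArr s r)) p.
    case: p => y a; have [g t'g ga] := den_eta_body a (tF y) erefl (frefl _).
    by exists g; rewrite /= ffunE.
  have [V tV] := choice _ agree.
  by apply: (@den_glue _ _ (TArr s r) _ V) => p; case: (tV p).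
- by move=> rho t T v V _ IH VV t' tt'; apply: (den_glue (V := V)) => // a; apply: IH.
Qed.

Lemma den_reduce rho t t' T (v : sem T) : star step t t' -> den rho t v -> den rho t' v.
Proof.
move=> tt'; elim: tt' v => // t1 t2 t3 /step_beta_eta t12 _ IH v t1v; apply: IH.
by case: t12 => t12; [apply: den_beta_step t12|apply: den_eta_step t12].
Qed.

Lemma den_typed G t T rho : typed G t T ->
  (forall n, n < size G -> projT1 (rho n) = nth TO G n) -> exists v : sem T, den rho t v.
Proof.
move=> tT; elim: tT rho => {G t T}.
- move=> G n lt_nG rho rhoG; case E: (rho n) (rhoG n lt_nG) => [T v] /= <-.
  by exists v; apply: den_var.
- move=> G t u s r _ IHt _ IHu rho rhoG.
  have [f tf] := IHt rho rhoG; have [x ux] := IHu rho rhoG.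
  by exists (f x); apply: den_app.
- move=> G t s r _ IH rho rhoG.
  have tx (x : sem s) : exists y : sem r, den (scons (existT _ s x) rho) t y.
    by apply: IH => -[|n] //= /rhoG.
  have [F tF] := choice _ tx.
  by exists [ffun x => F x]; apply: den_lam.
Qed.

(* β-normal forms.  Church numerals need not be η-normal ([church 1] is an
   η-redex), but β-normality already makes denotations unique. *)
Fixpoint neutral (t : tm) : bool :=
  match t with Var _ => true | App a b => neutral a && normal b | Lam _ => false end
with normal (t : tm) : bool :=
  match t with Var _ => true | App a b => neutral a && normal b | Lam b => normal b end.

Lemma neutral_normal t : neutral t -> normal t.
Proof. by case: t. Qed.

Lemma lift_neutral_normal t c :
  neutral (lift_tm c t) = neutral t /\ normal (lift_tm c t) = normal t.
Proof.
elim: t c => [n|a IHa b IHb|b IH] c /=; first by case: ifP.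
  by rewrite (IHa c).1 (IHb c).2.
by rewrite (IH c.+1).2.
Qed.

Lemma step_neutral_normal t t' :
  step t t' -> (neutral t -> neutral t') /\ (normal t -> normal t').
Proof.
elim=> {t t'} /=.
- by [].
- move=> t; split=> // /andP[nt _]; apply: neutral_normal.
  by rewrite -(lift_neutral_normal t 0).1.
- by move=> t t' u _ [nt Nt]; split=> /andP[/nt -> ->].
- by move=> t u u' _ [nu Nu]; split=> /andP[-> /Nu ->].
- by move=> t t' _ [].
Qed.

Lemma star_normal t t' : star step t t' -> normal t -> normal t'.
Proof. by elim=> // x y z /step_neutral_normal[_ Nxy] _ IH /Nxy. Qed.

Definition den_determined t := forall rho T (v : sem T) T' (v' : sem T'),
  den rho t v -> den rho t v' -> existT sem T v = existT sem T' v'.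

Definition den_determined_at t := forall rho T (v v' : sem T),
  den rho t v -> den rho t v' -> v = v'.

Lemma den_determinedW t : den_determined t -> den_determined_at t.
Proof. by move=> dt rho T v v' tv tv'; apply/existT_sem_inj/(dt _ _ _ _ _ tv tv'). Qed.

Lemma den_determined_var n : den_determined (Var n).
Proof.
by move=> rho T v T' v' nv nv'; rewrite -(den_var_inv nv erefl) -(den_var_inv nv' erefl).
Qed.

Lemma den_determined_app a b :
  den_determined a -> den_determined_at b -> den_determined (App a b).
Proof.
move=> da db rho T v T' v' abv abv'.
have [s [f [x [af bx _]]]] := den_app_inv (args0 T) abv erefl.
have [s' [f' [x' [af' bx' _]]]] := den_app_inv (args0 T') abv' erefl.
case: (existT_sem_ty (da _ _ _ _ _ af af')) => ? ?; subst s' T'.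
congr existT; apply: apply_args_inj => p.
have [s1 [f1 [x1 [af1 bx1 <-]]]] := den_app_inv p abv erefl.
have [s2 [f2 [x2 [af2 bx2 <-]]]] := den_app_inv p abv' erefl.
have E12 := da _ _ _ _ _ af1 af2.
case: (existT_sem_ty E12) => ?; subst s2; have ? := existT_sem_inj E12; subst f2.
by rewrite (db _ _ _ _ bx1 bx2).
Qed.

Lemma den_determined_lam b : den_determined_at b -> den_determined_at (Lam b).
Proof.
move=> db rho T v v' bv bv'; have [s [r ET]] := den_lam_arrow bv erefl; subst T.
apply/ffunP => y.
exact: db _ _ _ _ (den_lam_inv y bv erefl erefl) (den_lam_inv y bv' erefl erefl).
Qed.

Lemma den_normal t :
  (neutral t -> den_determined t) /\ (normal t -> den_determined_at t).
Proof.
elim: t => [n|a [da _] b [_ db]|b [_ db]] /=.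
- by split=> _; [|apply: den_determinedW]; apply: den_determined_var.
- have dab (nab : neutral a && normal b) : den_determined (App a b).
    by case/andP: nab => /da ? /db ?; apply: den_determined_app.
  by split=> // /dab /den_determinedW.
- by split=> // /db /den_determined_lam.
Qed.

(** * Church numerals in the model *)

Definition eventually_periodic (X : Type) (u : nat -> X) :=
  exists N p, 0 < p /\ forall m, N <= m -> u (m + p) = u m.

Lemma eventually_periodic_comp X Y (h : X -> Y) (u : nat -> X) :
  eventually_periodic u -> eventually_periodic (h \o u).
Proof. by case=> N [p [p_gt0 up]]; exists N, p; split=> // m /up /= ->. Qed.

Lemma iter_eventually_periodic (X : finType) (g : X -> X) (z : X) :
  eventually_periodic (fun k => iter k g z).
Proof.
pose h (i : 'I_#|X|.+1) := iter i g z.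
have /injectivePn[i [j neq_ij hij]] : ~~ injectiveb h.
  by apply/injectiveP => /leq_card; rewrite card_ord ltnn.
wlog lt_ij : i j neq_ij hij / i < j.
  move=> W; case: (ltngtP i j) => [|lt_ji|/val_inj eq_ij]; first exact: W.
    by apply: (W j i); rewrite // eq_sym.
  by rewrite eq_ij eqxx in neq_ij.
exists i, (j - i); split=> [|m le_im]; first by rewrite subn_gt0.
have -> : m + (j - i) = (m - i) + j by lia.
by rewrite iterD -[in RHS](subnK le_im) iterD; congr iter.
Qed.

Definition succ_sem T (n : sem (omega T)) : sem (omega T) :=
  [ffun f : sem (TArr T T) => [ffun x : sem T => f (n f x)]].

Definition church_sem T k : sem (omega T) :=
  [ffun f : sem (TArr T T) => [ffun x : sem T => iter k f x]].

Lemma church_sem_iter T k : church_sem T k = iter k (@succ_sem T) (church_sem T 0).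
Proof.
elim: k => [//|k IH]; rewrite iterS -IH.
by apply/ffunP => f; apply/ffunP => x; rewrite !ffunE.
Qed.

Lemma church_sem_eventually_periodic T : eventually_periodic (church_sem T).
Proof.
have [N [p [p_gt0 per]]] := iter_eventually_periodic (@succ_sem T) (church_sem T 0).
by exists N, p; split=> // m /per; rewrite -!church_sem_iter.
Qed.

Lemma church_sem_0_1 T : church_sem T 0 <> church_sem T 1.
Proof.
pose apply_to (n : sem (omega T)) := n [ffun _ => sem_const true T] (sem_const false T).
by move=> /(congr1 apply_to); rewrite /apply_to !ffunE /= ffunE; apply: sem_const_neq.
Qed.

Lemma den_church rho T k : den rho (church k) (church_sem T k).
Proof.
apply: den_lam => f; apply: (den_lam (F := fun x => iter k f x)) => x.
elim: k => [|k IH] /=; first exact: den_var.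
by apply: (den_app (s := T)) => //; apply: den_var.
Qed.

Lemma church_normal k : normal (church k).
Proof. by rewrite /church /=; elim: k => //= k ->. Qed.

Lemma enum_ord3 : enum 'I_3 = [:: inord 0; inord 1; inord 2].
Proof. by apply: (inj_map val_inj); rewrite val_enum_ord /= !inordK. Qed.

Lemma strictly_definable_sem (f : fn 3) : strictly_definable f ->
  exists T (e : sem (arrows 3 (omega T) (omega T))), forall x,
    e (church_sem T (arg3 x 0)) (church_sem T (arg3 x 1)) (church_sem T (arg3 x 2))
    = church_sem T (f x).
Proof.
case=> T [E [ET Ef]]; pose rho0 (n : nat) := existT sem TO false.
have [e Ee] := den_typed (rho := rho0) ET (fun n _ => esym (nth_nil TO n)).
exists T, e => x; have := Ef x; rewrite enum_ord3 /= => /conv_join[w Ew fw].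
have Ex := den_app (den_app (den_app Ee (den_church rho0 T (arg3 x 0)))
  (den_church rho0 T (arg3 x 1))) (den_church rho0 T (arg3 x 2)).
apply: (den_normal w).2 (star_normal fw (church_normal _)) _ _ _ _ (den_reduce Ew Ex) _.
exact: den_reduce fw (den_church _ _ _).
Qed.

Definition selector (b : nat -> bool) : fn 3 :=
  fun x => if b (arg3 x 0) then arg3 x 1 else arg3 x 2.

Lemma definable_selector_eventually_periodic (A : nat -> Prop) (f : fn 3) :
    (forall x, (A (arg3 x 0) -> f x = arg3 x 1) /\ (~ A (arg3 x 0) -> f x = arg3 x 2)) ->
    strictly_definable f ->
  exists2 b : nat -> bool, forall m, b m <-> A m & eventually_periodic b.
Proof.
move=> Af /strictly_definable_sem[T [e ef]]; pose c := church_sem T.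
exists (fun m => e (c m) (c 0) (c 1) == c 0); last first.
  exact: (eventually_periodic_comp (fun n => e n (c 0) (c 1) == c 0))
    (church_sem_eventually_periodic T).
move=> m; pose x (i : 'I_3) := nth 0 [:: m; 0; 1] i.
have [x0 x1 x2] : [/\ arg3 x 0 = m, arg3 x 1 = 0 & arg3 x 2 = 1].
  by rewrite /arg3 /x !inordK.
have := ef x; rewrite x0 x1 x2 => ->; have [] := Af x; rewrite x0 x1 x2 => Am nAm.
split=> [/eqP E|/Am -> //]; apply: NNPP => /nAm fx.
by apply: (@church_sem_0_1 T); rewrite -fx.
Qed.

(** * Eventually periodic selectors are in G *)

Lemma classG_arg3 i : classG (fun x => arg3 x i).
Proof. exact/G_ep/ep_proj. Qed.

Lemma classG_branch (c : bool) : classG (fun x => if c then arg3 x 1 else arg3 x 2).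
Proof. by case: c; apply: classG_arg3. Qed.

Lemma classG_f2 k : classG (f2 k).
Proof.
case: k => [|k]; last exact: G_f2.
by apply: (G_ext (G_ep ep_ifzero)) => x; rewrite /f2 leqn0.
Qed.

Lemma classG_le_branch k (c : bool) (g : fn 3) : classG g ->
  classG (fun x => if arg3 x 0 <= k then (if c then arg3 x 1 else arg3 x 2) else g x).
Proof.
move=> Gg; pose gs (i : 'I_3) :=
  nth g [:: fun x => arg3 x 0; fun x => if c then arg3 x 1 else arg3 x 2] i.
apply: (G_ext (G_comp (classG_f2 k) (gs := gs) _)) => [[[|[|[|//]]] ?]|x].
- exact: classG_arg3.
- exact: classG_branch.
- exact: Gg.
- by rewrite /comp_fn /f2 /arg3 /gs !inordK.
Qed.

Lemma classG_selector_patch (b : nat -> bool) n (g : fn 3) : classG g ->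
  (forall x, n <= arg3 x 0 -> g x = selector b x) -> classG (selector b).
Proof.
elim: n g => [|n IH] g Gg gb; first exact: G_ext Gg (fun x => gb x (leq0n _)).
apply: IH (classG_le_branch n (b n) Gg) _ => x le_nx.
case: leqP => [le_xn|/gb //]; rewrite /selector.
by have -> : arg3 x 0 = n by apply/eqP; rewrite eqn_leq le_xn.
Qed.

Lemma periodic_addnM (X : Type) (u : nat -> X) N p m k :
  (forall m, N <= m -> u (m + p) = u m) -> N <= m -> u (m + k * p) = u m.
Proof.
move=> per le_Nm; elim: k => [|k IH]; first by rewrite addn0.
by rewrite mulSn addnCA addnC per ?IH //; apply: leq_trans le_Nm (leq_addr _ _).
Qed.

Lemma classG_selector_periodic (b : nat -> bool) N p : 1 < p ->
  (forall m, N <= m -> b (m + p) = b m) ->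
  exists2 g : fn 3, classG g & forall x, N <= arg3 x 0 -> g x = selector b x.
Proof.
move=> p_gt1 per.
(* Argument [r.+1] of f1^p is the branch for residue [r], read off at its
   representative [N * p + r >= N]. *)
pose gs (i : 'I_p.+1) : fn 3 :=
  if nat_of_ord i is r.+1 then fun x => if b (N * p + r) then arg3 x 1 else arg3 x 2
  else fun x => arg3 x 0.
exists (comp_fn (@f1 p) gs).
  by apply: G_comp => [|[[|r] ?]]; [apply: G_f1|apply: classG_arg3|apply: classG_branch].
move=> x le_Nx; have lt_r : (arg3 x 0 %% p).+1 < p.+1 by rewrite ltnS ltn_mod; lia.
rewrite /comp_fn /f1 /gs /= inordK //= /selector; set m := arg3 x 0 in le_Nx *.
suff -> : b (N * p + m %% p) = b m by [].
rewrite -(@periodic_addnM _ b N p m N per le_Nx).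
have -> : m + N * p = N * p + m %% p + m %/ p * p by rewrite {1}(divn_eq m p); lia.
rewrite (@periodic_addnM _ b N p) //; apply: leq_trans (leq_addr _ _).
by rewrite leq_pmulr //; lia.
Qed.

Lemma classG_selector (b : nat -> bool) : eventually_periodic b -> classG (selector b).
Proof.
case=> N [p [p_gt0 per]].
have per2 m : N <= m -> b (m + p.*2) = b m.
  by move=> le_Nm; rewrite -addnn addnA !per //; lia.
have p2_gt1 : 1 < p.*2 by rewrite -addnn; lia.
have [g Gg gb] := classG_selector_periodic p2_gt1 per2.
exact: classG_selector_patch Gg gb.
Qed.

Theorem theorem3 (A : nat -> Prop) (f : fn 3) :
  (forall x : 'I_3 -> nat,
     (A (arg3 x 0) -> f x = arg3 x 1) /\ (~ A (arg3 x 0) -> f x = arg3 x 2)) ->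
  ~ strictly_definable f \/ classG f.
Proof.
move=> Af; have [|] := classic (strictly_definable f); last by left.
case/(definable_selector_eventually_periodic Af) => b bA per; right.
apply: G_ext (classG_selector per) _ => x; rewrite /selector.
have [fA nfA] := Af x; case: ifP => [/bA/fA -> //|bF].
by rewrite nfA // => /bA; rewrite bF.
Qed.
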